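(* Let $J_{ab}$ be a non-degenerate skew form on a real vector space of dimension $2n$ with $n\geq 2$, with inverse $J^{ab}$. Suppose $T_{abcd}$ is a tensor with $T_{abcd}=T_{[ab][cd]}$ and $T_{[abc]d}=J_{[ab}\psi_{c]d}$ for some tensor $\psi_{cd}$. Then there are unique tensors $\rho_{ab}$ (no symmetry assumed), $\tau_{ab}=\tau_{[ab]}$, and $X_{abcd}$ with $X_{abcd}=X_{[ab][cd]}$, $X_{[abc]d}=0$ and $J^{ab}X_{abcd}=0$, such that $$T_{abcd}=X_{abcd}+J_{c[a}\rho_{b]d}-J_{d[a}\rho_{b]c}-J_{cd}\rho_{[ab]}+J_{ab}\tau_{cd}.$$
   Context: Abstract index notation; square brackets denote skew-symmetrisation over the enclosed indices. *)

(* Tensors on R^(2n) in a fixed basis, indices in 'I_(n.*2). *)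
From HB Require Import structures.
From mathcomp Require Import all_boot all_order all_algebra.
From mathcomp Require Import reals.
Set Implicit Arguments. Unset Strict Implicit. Unset Printing Implicit Defensive.
Import Order.TTheory GRing.Theory Num.Theory.
Local Open Scope ring_scope.

Section Tensors.
Variables (R : realType) (m : nat).
Notation I := 'I_m.

Definition tensor2 := I -> I -> R.
Definition tensor4 := I -> I -> I -> I -> R.

Definition skew2 (t : tensor2) : tensor2 := fun a b => (t a b - t b a) / 2%:R.

Definition skew_ab_cd (T : tensor4) : tensor4 := fun a b c d =>
  (T a b c d - T b a c d - T a b d c + T b a d c) / 4%:R.

Definition alt3 (T : tensor4) : tensor4 := fun a b c d =>
  (T a b c d + T b c a d + T c a b d
   - T b a c d - T a c b d - T c b a d) / 6%:R.

Definition J_wedge_psi (J psi : tensor2) : tensor4 :=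
  alt3 (fun a b c d => J a b * psi c d).

Definition J_skew_rho (J rho : tensor2) : tensor4 := fun a b c d =>
  (J c a * rho b d - J c b * rho a d) / 2%:R.

Definition contractJ (Jinv : tensor2) (X : tensor4) : tensor2 := fun c d =>
  \sum_(a < m) \sum_(b < m) Jinv a b * X a b c d.

Definition decomp (J rho tau : tensor2) (X : tensor4) : tensor4 := fun a b c d =>
  X a b c d + J_skew_rho J rho a b c d - J_skew_rho J rho a b d c
  - J c d * skew2 rho a b + J a b * tau c d.

Definition admissible (J : 'M[R]_m) (T : tensor4)
    (rho tau : tensor2) (X : tensor4) : Prop :=
  [/\ forall a b, tau a b = skew2 tau a b,
      forall a b c d, X a b c d = skew_ab_cd X a b c d,
      forall a b c d, alt3 X a b c d = 0,
      forall c d, contractJ (fun a b => invmx J a b) X c d = 0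
    & forall a b c d, T a b c d = decomp (fun a b => J a b) rho tau X a b c d].
End Tensors.

From HB Require Import structures.
From mathcomp Require Import all_boot all_order all_algebra.
From mathcomp Require Import reals.
From mathcomp Require Import ring.
Import Order.TTheory GRing.Theory Num.Theory.
Local Open Scope ring_scope.
Set Implicit Arguments. Unset Strict Implicit. Unset Printing Implicit Defensive.

(* Skew-symmetrising the decomposition over [abc] kills every term except X and
   J_{[ab}(rho + tau)_{c]d}; as the J-trace of J_{[ab}phi_{c]d} over ab is
   (2 - m)/3 phi_{cd}, this forces rho + tau = psi when m <> 2.  Taking the J-trace
   of the decomposition over ab then gives a linear equation for the skew tensor
   tau of the form (m + 2) tau_{cd} - (J^{ab} tau_{ab}) J_{cd} = given, which one
   more trace solves uniquely; X is whatever remains of T. *)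

Section SymplecticDecomposition.
Variables (R : realType) (m : nat) (J : 'M[R]_m).
Hypotheses (J_tr : J^T = - J) (J_unit : J \in unitmx).
Notation I := 'I_m.
Notation Jt := (fun a b : I => J a b).
Notation Ji := (fun a b : I => invmx J a b).

Lemma J_skew a b : J b a = - J a b.
Proof. by have := congr1 (fun M : 'M[R]_m => M a b) J_tr; rewrite !mxE. Qed.

Lemma invJ_skew a b : invmx J b a = - invmx J a b.
Proof.
have E : (invmx J)^T = - invmx J.
  have NJ_unit : (-1) *: J \in unitmx by rewrite scaleN1r -J_tr unitmx_tr.
  by rewrite trmx_inv J_tr -scaleN1r invmxZ // invrN1 scaleN1r.
by have := congr1 (fun M : 'M[R]_m => M a b) E; rewrite !mxE.
Qed.

Lemma sum_J_invJ a c : \sum_b J a b * invmx J b c = (a == c)%:R.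
Proof.
by have := congr1 (fun M : 'M[R]_m => M a c) (mulmxV J_unit); rewrite !mxE.
Qed.

Definition contract2 (f : tensor2 R m) : R := \sum_a \sum_b invmx J a b * f a b.

Lemma contractJE (X : tensor4 R m) c d :
  contractJ Ji X c d = contract2 (fun a b => X a b c d).
Proof. by []. Qed.

Lemma eq_contract2 (f g : tensor2 R m) :
  (forall a b, f a b = g a b) -> contract2 f = contract2 g.
Proof. by move=> fg; apply: eq_bigr => a _; apply: eq_bigr => b _; rewrite fg. Qed.

Lemma contract2D (f g : tensor2 R m) :
  contract2 (fun a b => f a b + g a b) = contract2 f + contract2 g.
Proof.
rewrite /contract2 -big_split; apply: eq_bigr => a _; rewrite -big_split.
by apply: eq_bigr => b _; rewrite mulrDr.
Qed.

Lemma contract2Ml k (f : tensor2 R m) :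
  contract2 (fun a b => k * f a b) = k * contract2 f.
Proof.
rewrite /contract2 mulr_sumr; apply: eq_bigr => a _; rewrite mulr_sumr.
by apply: eq_bigr => b _; rewrite mulrCA.
Qed.

Lemma contract2Mr k (f : tensor2 R m) :
  contract2 (fun a b => f a b * k) = contract2 f * k.
Proof. by rewrite mulrC -contract2Ml; apply: eq_contract2 => a b; rewrite mulrC. Qed.

Lemma contract2N (f : tensor2 R m) : contract2 (fun a b => - f a b) = - contract2 f.
Proof.
by rewrite -mulN1r -contract2Ml; apply: eq_contract2 => a b; rewrite mulN1r.
Qed.

Lemma contract2B (f g : tensor2 R m) :
  contract2 (fun a b => f a b - g a b) = contract2 f - contract2 g.
Proof. by rewrite contract2D contract2N. Qed.

Lemma contract20 : contract2 (fun _ _ => 0) = 0.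
Proof. by rewrite /contract2 big1 // => a _; rewrite big1 // => b _; rewrite mulr0. Qed.

Lemma contract2_swap (f : tensor2 R m) : contract2 (fun a b => f b a) = - contract2 f.
Proof.
rewrite /contract2 exchange_big -contract2N; apply: eq_bigr => a _.
by apply: eq_bigr => b _; rewrite invJ_skew mulNr mulrN.
Qed.

Lemma sum_delta (g : I -> R) c : \sum_b (c == b)%:R * g b = g c.
Proof.
under eq_bigr do rewrite mulr_natl mulrb.
by rewrite -big_mkcond /= (eq_bigl (pred1 c)) ?big_pred1_eq // => b; rewrite eq_sym.
Qed.

Lemma contract2_Jca c (g : I -> R) : contract2 (fun a b => J c a * g b) = g c.
Proof.
rewrite /contract2 exchange_big /= -[RHS]sum_delta; apply: eq_bigr => b _.
by rewrite -sum_J_invJ mulr_suml; apply: eq_bigr => a _; rewrite mulrCA mulrA.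
Qed.

Lemma contract2_Jcb c (g : I -> R) : contract2 (fun a b => J c b * g a) = - g c.
Proof. by rewrite (contract2_swap (fun a b => J c a * g b)) contract2_Jca. Qed.

Lemma contract2_Jbc c (g : I -> R) : contract2 (fun a b => J b c * g a) = g c.
Proof.
rewrite (@eq_contract2 _ (fun a b => - (J c b * g a))) => [|a b].
  by rewrite contract2N contract2_Jcb opprK.
by rewrite J_skew mulNr.
Qed.

Lemma contract2_Jac c (g : I -> R) : contract2 (fun a b => J a c * g b) = - g c.
Proof.
by rewrite (contract2_swap (fun a b => J b c * g a)) contract2_Jbc.
Qed.

Lemma contract2_J : contract2 Jt = - m%:R.
Proof.
rewrite /contract2 -[m in RHS]card_ord -sumr_const -sumrN.
apply: eq_bigr => a _; have aa : (a == a)%:R = 1 :> R by rewrite eqxx.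
rewrite -aa -sum_J_invJ -sumrN; apply: eq_bigr => b _.
by rewrite invJ_skew mulNr mulrC.
Qed.

Lemma contract2_J_wedge_psi (phi : tensor2 R m) c d :
  contract2 (fun a b => J_wedge_psi Jt phi a b c d) = (2 - m%:R) / 3%:R * phi c d.
Proof.
rewrite (@eq_contract2 _ (fun a b => 6%:R^-1 * (J a b * phi c d + J b c * phi a d
    + J c a * phi b d - J b a * phi c d - J a c * phi b d - J c b * phi a d)));
  last by move=> a b; rewrite /J_wedge_psi /alt3 mulrC.
rewrite contract2Ml !contract2B !contract2D !contract2Mr.
rewrite (contract2_swap Jt) contract2_J contract2_Jbc contract2_Jca.
rewrite contract2_Jac contract2_Jcb.
by field.
Qed.

Lemma J_wedge_psi_eq0 (phi : tensor2 R m) : (m != 2)%N ->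
  (forall a b c d, J_wedge_psi Jt phi a b c d = 0) -> forall c d, phi c d = 0.
Proof.
move=> m_neq2 wedge0 c d.
have := contract2_J_wedge_psi phi c d.
rewrite (eq_contract2 (fun a b => wedge0 a b c d)) contract20 => /esym/eqP.
rewrite !mulf_eq0 invr_eq0 pnatr_eq0 subr_eq0 orbF => /predU1P [m2|/eqP //].
by move: m_neq2; rewrite -(eqr_nat R) -m2 eqxx.
Qed.

Lemma contractJ_decomp (rho tau : tensor2 R m) (X : tensor4 R m) c d :
  contractJ Ji (decomp Jt rho tau X) c d =
  contractJ Ji X c d + rho c d - rho d c - contract2 rho * J c d - m%:R * tau c d.
Proof.
rewrite !contractJE (@eq_contract2 _ (fun a b => X a b c d
    + 2%:R^-1 * (J c a * rho b d) - 2%:R^-1 * (J c b * rho a d)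
    - 2%:R^-1 * (J d a * rho b c) + 2%:R^-1 * (J d b * rho a c)
    - (J c d / 2%:R) * rho a b + (J c d / 2%:R) * rho b a + J a b * tau c d));
  last by move=> a b; rewrite /decomp /J_skew_rho /skew2; ring.
rewrite !(contract2D, contract2B, contract2N) !contract2Ml contract2Mr.
rewrite !contract2_Jca !contract2_Jcb (contract2_swap rho) contract2_J.
by field.
Qed.

Lemma J_wedge_psiD (phi psi : tensor2 R m) a b c d :
  J_wedge_psi Jt (fun x y => phi x y + psi x y) a b c d =
  J_wedge_psi Jt phi a b c d + J_wedge_psi Jt psi a b c d.
Proof. by rewrite /J_wedge_psi /alt3; ring. Qed.

Lemma alt3_decomp (rho tau : tensor2 R m) (X : tensor4 R m) a b c d :
  alt3 (decomp Jt rho tau X) a b c d =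
  alt3 X a b c d + J_wedge_psi Jt (fun x y => rho x y + tau x y) a b c d.
Proof.
rewrite J_wedge_psiD /alt3 /decomp /J_wedge_psi /J_skew_rho /skew2 /alt3.
rewrite (J_skew a b) (J_skew a c) (J_skew b c) (J_skew a d) (J_skew b d) (J_skew c d).
by field.
Qed.

Lemma dim_add2_neq0 : m%:R + 2 != 0 :> R.
Proof. by rewrite -natrD pnatr_eq0 addn2. Qed.

Lemma dim_double_add2_neq0 : 2 * m%:R + 2 != 0 :> R.
Proof. by rewrite -natrM -natrD pnatr_eq0 addn2. Qed.

Lemma decomp_eq0 (rho tau : tensor2 R m) (X : tensor4 R m) : (m != 2)%N ->
  (forall a b, tau b a = - tau a b) ->
  (forall a b c d, alt3 X a b c d = 0) ->
  (forall c d, contractJ Ji X c d = 0) ->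
  (forall a b c d, decomp Jt rho tau X a b c d = 0) ->
  [/\ forall a b, rho a b = 0, forall a b, tau a b = 0
    & forall a b c d, X a b c d = 0].
Proof.
move=> m_neq2 tau_skew X_alt X_trJ decomp0.
have rhoE a b : rho a b = - tau a b.
  apply/eqP; rewrite -addr_eq0; apply/eqP; move: a b; apply: J_wedge_psi_eq0 => //.
  move=> a b c d; have := alt3_decomp rho tau X a b c d; rewrite X_alt add0r => <-.
  by rewrite /alt3 !decomp0 !(addr0, subr0) mul0r.
have contract_rho : contract2 rho = - contract2 tau.
  by rewrite -contract2N; apply: eq_contract2.
have tauE c d : (m%:R + 2) * tau c d = contract2 tau * J c d.
  have := contractJ_decomp rho tau X c d.
  rewrite contractJE (eq_contract2 (fun a b => decomp0 a b c d)) contract20 X_trJ.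
  rewrite !rhoE contract_rho tau_skew => E.
  by rewrite -[RHS]subr0 [X in _ - X]E; ring.
have trace_tau : contract2 tau = 0.
  have := eq_contract2 tauE.
  rewrite !contract2Ml contract2_J => E.
  have : (2 * m%:R + 2) * contract2 tau =
         (m%:R + 2) * contract2 tau - contract2 tau * - m%:R by ring.
  by rewrite E subrr => /eqP; rewrite mulf_eq0 (negbTE dim_double_add2_neq0) => /eqP.
have tau0 a b : tau a b = 0.
  by apply/eqP; move/eqP: (tauE a b); rewrite trace_tau mul0r mulf_eq0 (negbTE dim_add2_neq0).
have rho0 a b : rho a b = 0 by rewrite rhoE tau0 oppr0.
split=> // a b c d; move: (decomp0 a b c d).
by rewrite /decomp /J_skew_rho /skew2 !rho0 !tau0 !(mulr0, subr0, mul0r, addr0).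
Qed.

Lemma skew2_antisym (t : tensor2 R m) :
  (forall a b, t a b = skew2 t a b) -> forall a b, t b a = - t a b.
Proof.
move=> t_skew a b; have E := t_skew a b; rewrite /skew2 in E.
have E2 : t a b * 2%:R = t a b - t b a by rewrite {1}E; field.
have -> : t b a = t a b - t a b * 2%:R by rewrite E2; ring.
ring.
Qed.

Lemma admissible_unique (T : tensor4 R m) (rho1 tau1 rho2 tau2 : tensor2 R m)
    (X1 X2 : tensor4 R m) : (m != 2)%N ->
  admissible J T rho1 tau1 X1 -> admissible J T rho2 tau2 X2 ->
  [/\ forall a b, rho1 a b = rho2 a b, forall a b, tau1 a b = tau2 a b
    & forall a b c d, X1 a b c d = X2 a b c d].
Proof.
move=> m_neq2 [tau1_skew _ X1_alt X1_trJ T1] [tau2_skew _ X2_alt X2_trJ T2].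
have [||||] := @decomp_eq0 (fun a b => rho1 a b - rho2 a b)
  (fun a b => tau1 a b - tau2 a b) (fun a b c d => X1 a b c d - X2 a b c d) m_neq2.
- move=> a b; rewrite (skew2_antisym tau1_skew) (skew2_antisym tau2_skew); ring.
- move=> a b c d; have := X1_alt a b c d; have := X2_alt a b c d.
  by rewrite /alt3 => E2 E1; rewrite -[RHS](subrr 0) -{1}E1 -E2; ring.
- by move=> c d; rewrite contractJE contract2B -!contractJE X1_trJ X2_trJ subrr.
- move=> a b c d; rewrite -[RHS](subrr (T a b c d)) {1}T1 T2.
  by rewrite /decomp /J_skew_rho /skew2; ring.
move=> drho0 dtau0 dX0.
by split=> *; apply/eqP; rewrite -subr_eq0; apply/eqP.
Qed.

Section Existence.
Variables (T : tensor4 R m) (psi : tensor2 R m).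
Hypothesis T_skew : forall a b c d, T a b c d = skew_ab_cd T a b c d.
Hypothesis T_alt : forall a b c d, alt3 T a b c d = J_wedge_psi Jt psi a b c d.

Lemma T_antisym_ab a b c d : T b a c d = - T a b c d.
Proof. by rewrite T_skew [in RHS]T_skew /skew_ab_cd; ring. Qed.

Lemma T_antisym_cd a b c d : T a b d c = - T a b c d.
Proof. by rewrite T_skew [in RHS]T_skew /skew_ab_cd; ring. Qed.

(* With rho := psi - tau, the condition J^{ab} X_{abcd} = 0 reads
   (m + 2) tau_{cd} - (J^{ab} tau_{ab}) J_{cd} = tau_rhs_{cd}; contracting it once
   more determines J^{ab} tau_{ab}. *)
Let tau_rhs : tensor2 R m := fun c d =>
  psi c d - psi d c - contract2 psi * J c d - contractJ Ji T c d.
Let tau0 : tensor2 R m := fun c d =>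
  (tau_rhs c d + contract2 tau_rhs / (2 * m%:R + 2) * J c d) / (m%:R + 2).
Let rho0 : tensor2 R m := fun c d => psi c d - tau0 c d.
Let D0 : tensor4 R m := decomp Jt rho0 tau0 (fun _ _ _ _ => 0).
Let X0 : tensor4 R m := fun a b c d => T a b c d - D0 a b c d.

Lemma tau0_antisym c d : tau0 d c = - tau0 c d.
Proof.
have contractJ_T_antisym : contractJ Ji T d c = - contractJ Ji T c d.
  rewrite !contractJE -contract2N.
  by apply: eq_contract2 => a b; rewrite T_antisym_cd.
by rewrite /tau0 /tau_rhs contractJ_T_antisym J_skew; ring.
Qed.

Lemma contract2_tau0 : contract2 tau0 = contract2 tau_rhs / (2 * m%:R + 2).
Proof.
rewrite (@eq_contract2 _ (fun c d => (m%:R + 2)^-1 *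
   (tau_rhs c d + contract2 tau_rhs / (2 * m%:R + 2) * J c d))); last first.
  by move=> c d; rewrite /tau0 mulrC.
rewrite contract2Ml contract2D contract2Ml contract2_J.
by field; rewrite dim_add2_neq0 dim_double_add2_neq0.
Qed.

Lemma D0_antisym_ab a b c d : D0 b a c d = - D0 a b c d.
Proof. by rewrite /D0 /decomp /J_skew_rho /skew2 (J_skew a b); ring. Qed.

Lemma D0_antisym_cd a b c d : D0 a b d c = - D0 a b c d.
Proof.
by rewrite /D0 /decomp /J_skew_rho /skew2 (J_skew c d) (tau0_antisym c d); ring.
Qed.

Lemma decomp_exists : exists rho tau X, admissible J T rho tau X.
Proof.
exists rho0, tau0, X0; split.
- by move=> a b; rewrite /skew2 (tau0_antisym a b); field.
- move=> a b c d; rewrite /skew_ab_cd /X0 (T_antisym_ab a b d c) (T_antisym_ab a b c d).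
  rewrite (T_antisym_cd a b c d) (D0_antisym_ab a b d c) (D0_antisym_ab a b c d).
  by rewrite (D0_antisym_cd a b c d); field.
- move=> a b c d.
  have -> : alt3 X0 a b c d = alt3 T a b c d - alt3 D0 a b c d by rewrite /alt3 /X0; ring.
  rewrite T_alt /D0 alt3_decomp.
  by rewrite /J_wedge_psi /alt3 /rho0; ring.
- move=> c d; rewrite contractJE contract2B -!contractJE /D0 contractJ_decomp.
  rewrite (contractJE (fun _ _ _ _ => 0)) contract20 /rho0 contract2B contract2_tau0.
  rewrite (tau0_antisym c d) /tau0 /tau_rhs.
  by field; rewrite dim_add2_neq0 dim_double_add2_neq0.
- by move=> a b c d; rewrite /X0 /D0 /decomp /J_skew_rho /skew2; ring.
Qed.

End Existence.

End SymplecticDecomposition.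

Theorem lemma14 (R : realType) (n : nat) (hn : (2 <= n)%N)
  (J : 'M[R]_(n.*2))
  (hJskew : J^T = - J) (hJnd : J \in unitmx)
  (T : tensor4 R (n.*2))
  (hT : forall a b c d, T a b c d = skew_ab_cd T a b c d)
  (hpsi : exists psi : tensor2 R (n.*2),
     forall a b c d, alt3 T a b c d = J_wedge_psi (fun i j => J i j) psi a b c d) :
  (exists (rho tau : tensor2 R (n.*2)) (X : tensor4 R (n.*2)),
     admissible J T rho tau X) /\
  (forall (rho1 tau1 rho2 tau2 : tensor2 R (n.*2)) (X1 X2 : tensor4 R (n.*2)),
     admissible J T rho1 tau1 X1 -> admissible J T rho2 tau2 X2 ->
     [/\ forall a b, rho1 a b = rho2 a b,
         forall a b, tau1 a b = tau2 a b
       & forall a b c d, X1 a b c d = X2 a b c d]).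
Proof.
have dim_neq2 : (n.*2 != 2)%N by move: hn; rewrite -(leq_double 2); apply: contraTneq => ->.
split.
  have [psi T_alt] := hpsi.
  exact: (decomp_exists hJskew hJnd hT T_alt).
by move=> rho1 tau1 rho2 tau2 X1 X2; exact: (admissible_unique hJskew hJnd dim_neq2).
Qed.
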